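(* Let $s \ge 1$ and suppose $D$ is a $T_s$-free digraph on $n$ vertices. Then for every $k \ge 1$ there exists a $K_s$-free graph $G$ on $n$ vertices such that \[ i_k(G) \le \left(\frac{e}{k}\right)^k \cdot \mathrm{fwi}_k(D). \]
   Context: $T_s$ denotes the transitive tournament on $s$ vertices; a digraph is $T_s$-free if it contains no copy of $T_s$. For a digraph $D$, a $k$-tuple $(v_1,\dots,v_k) \in V(D)^k$ is forward independent if there are no $i<j$ in $[k]$ with $(v_i,v_j)$ an arc of $D$; $\mathrm{fwi}_k(D)$ denotes the number of forward independent $k$-tuples in $D$. For a graph $G$, $i_k(G)$ denotes the number of independent sets of size $k$ in $G$. *)

From mathcomp Require Import all_boot.
From Stdlib Require Import Reals.
Set Implicit Arguments. Unset Strict Implicit. Unset Printing Implicit Defensive.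

(* A digraph on the finite vertex type V is an arc relation a : rel V
   ((u,v) is an arc iff a u v).  A graph is a symmetric irreflexive rel V. *)

Definition contains_Ts (V : finType) (a : rel V) (s : nat) : Prop :=
  exists f : 'I_s -> V, injective f /\ forall i j : 'I_s, i < j -> a (f i) (f j).

Definition Ts_free (V : finType) (a : rel V) (s : nat) : Prop :=
  ~ contains_Ts a s.

Definition Ks_free (V : finType) (g : rel V) (s : nat) : Prop :=
  ~ exists f : 'I_s -> V, injective f /\ forall i j : 'I_s, i != j -> g (f i) (f j).

Definition fwi (V : finType) (a : rel V) (k : nat) : nat :=
  #|[set t : {ffun 'I_k -> V} |
     [forall i : 'I_k, forall j : 'I_k, (i < j) ==> ~~ a (t i) (t j)]]|.

Definition indep_count (V : finType) (g : rel V) (k : nat) : nat :=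
  #|[set S : {set V} | (#|S| == k) && [forall x in S, forall y in S, ~~ g x y]]|.

From mathcomp Require Import all_boot fingroup perm.
From Stdlib Require Import Reals Lra.
Set Implicit Arguments. Unset Strict Implicit. Unset Printing Implicit Defensive.

(* Rank the vertices by a permutation sg of V and let G_sg join u and v when
   D has an arc between them pointing forward in that order.  Listing a clique
   of G_sg in increasing order gives a transitive tournament of D, so G_sg is
   K_s-free.  Listing an independent k-set of G_sg in increasing order gives a
   forward independent k-tuple of D which is increasing, and a fixed injective
   k-tuple is increasing for at most a 1/k! fraction of the permutations.  So
   on average, hence for some sg, k! i_k(G_sg) <= fwi_k(D), and k! >= (k/e)^k. *)

Lemma card_set_sum (T : finType) (P : pred T) : #|[set x | P x]| = \sum_x P x.
Proof. by rewrite -sum1dep_card big_mkcond; apply: eq_bigr => x _; case: (P x). Qed.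

Lemma sum_card_rel (T U : finType) (R : T -> U -> bool) :
  \sum_x #|[set y | R x y]| = \sum_y #|[set x | R x y]|.
Proof.
under eq_bigr do rewrite card_set_sum.
by rewrite exchange_big; apply: eq_bigr => y _; rewrite card_set_sum.
Qed.

Lemma exists_le_average (T : finType) (f : T -> nat) c :
  0 < #|T| -> \sum_x f x <= #|T| * c -> exists x, f x <= c.
Proof.
move=> T_gt0 sum_le; apply/existsP; apply: contraLR sum_le.
rewrite negb_exists => /forallP f_gt; rewrite -ltnNge.
apply: leq_trans (_ : #|T| * c.+1 <= _); first by rewrite ltn_pmul2l.
by rewrite -sum_nat_const; apply: leq_sum => x _; rewrite ltnNge f_gt.
Qed.

Lemma ord_incr_ge k (g : 'I_k -> 'I_k) :
  {homo g : i j / i < j} -> forall i : 'I_k, i <= g i.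
Proof.
move=> g_incr [i lt_ik]; elim: i lt_ik => [//|i IHi] lt_i1k.
have lt_ik := ltnW lt_i1k.
exact: leq_ltn_trans (IHi lt_ik) (g_incr (Ordinal lt_ik) (Ordinal lt_i1k) (ltnSn i)).
Qed.

Lemma perm_incr_eq1 k (g : {perm 'I_k}) : {homo g : i j / i < j} -> g = 1%g.
Proof.
move=> g_incr.
have ginv_incr : {homo (g^-1)%g : i j / i < j}.
  move=> i j lt_ij; case: ltngtP => // [/g_incr | /val_inj/perm_inj eq_ji].
  - by rewrite !permKV => /(ltn_trans lt_ij); rewrite ltnn.
  - by rewrite eq_ji ltnn in lt_ij.
apply/permP => i; apply/val_inj/eqP.
by rewrite perm1 eqn_leq (ord_incr_ge g_incr) -{2}(permK g i) (ord_incr_ge ginv_incr).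
Qed.

Section IncreasingTuples.
Variables (V : finType) (r : V -> nat).

Definition increasing k (t : 'I_k -> V) : bool :=
  [forall i : 'I_k, forall j : 'I_k, (i < j) ==> (r (t i) < r (t j))].

Lemma increasingP k (t : 'I_k -> V) :
  reflect {homo t : i j / i < j >-> r i < r j} (increasing t).
Proof.
apply: (iffP forallP) => [t_incr i j lt_ij | t_incr i].
  by have /forallP/(_ j)/implyP := t_incr i; apply.
by apply/forallP => j; apply/implyP; apply: t_incr.
Qed.

Lemma increasing_inj k (t : 'I_k -> V) : increasing t -> injective t.
Proof.
move/increasingP=> t_incr i j eq_tij; apply/val_inj.
by case: (ltngtP i j) => // /t_incr; rewrite eq_tij ltnn.
Qed.

Lemma increasing_perm_uniq k (t : 'I_k -> V) (pi pi' : {perm 'I_k}) :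
  increasing (t \o pi) -> increasing (t \o pi') -> pi = pi'.
Proof.
move=> /increasingP t_pi_incr /increasingP t_pi'_incr.
suff eq1 : (pi' * pi^-1)%g = 1%g by rewrite -[pi']mulg1 -(mulVg pi) mulgA eq1 mul1g.
apply: perm_incr_eq1 => i j lt_ij; rewrite !permM.
case: ltngtP => // [/t_pi_incr | /val_inj/perm_inj/perm_inj eq_ji].
  by rewrite /= !permKV => /(ltn_trans (t_pi'_incr _ _ lt_ij)); rewrite ltnn.
by rewrite eq_ji ltnn in lt_ij.
Qed.

Hypothesis r_inj : injective r.

Lemma exists_increasing_enum (S : {set V}) k : #|S| = k ->
  exists2 t : 'I_k -> V, forall i, t i \in S & increasing t.
Proof.
case: k => [|k] card_S.
  exists (fun i : 'I_0 => False_rect V (notF (ltn_ord i))); first by case.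
  by apply/increasingP => -[].
have [x0 _] : exists x0, x0 \in S by apply/card_gt0P; rewrite card_S.
pose leT := [rel x y | r x <= r y].
pose s := sort leT (enum S).
have size_s : size s = k.+1 by rewrite size_sort -cardE card_S.
have leT_tr : transitive leT by move=> x y z; apply: leq_trans.
have s_sorted : sorted leT s by apply: sort_sorted => x y; apply: leq_total.
have s_uniq : uniq s by rewrite sort_uniq enum_uniq.
exists (fun i => nth x0 s i).
  by move=> i; rewrite -mem_enum -(mem_sort leT) mem_nth // size_s.
apply/increasingP => i j lt_ij.
have := sorted_ltn_nth leT_tr x0 s_sorted.
rewrite size_s => /(_ i j (ltn_ord i) (ltn_ord j) lt_ij).
rewrite /= leq_eqVlt => /orP [/eqP/r_inj|//].
move/eqP; rewrite nth_uniq ?size_s // => /eqP/val_inj eq_ij.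
by rewrite eq_ij ltnn in lt_ij.
Qed.

End IncreasingTuples.

Section RandomOrder.
Variable V : finType.

Definition prank (sg : {perm V}) (x : V) : nat := enum_rank (sg x).

Lemma prank_inj sg : injective (prank sg).
Proof. by move=> x y /val_inj/enum_rank_inj/perm_inj. Qed.

Lemma relabel_perm k (t : 'I_k -> V) (pi : {perm 'I_k}) : injective t ->
  exists tau : {perm V}, forall i, tau (t (pi i)) = t i.
Proof.
move=> t_inj.
pose f x := if [pick j | t j == x] is Some j then t ((pi^-1)%g j) else x.
have f_t i : f (t (pi i)) = t i.
  rewrite /f; case: pickP => [j /eqP/t_inj -> | /(_ (pi i))]; last by rewrite eqxx.
  by rewrite permK.
have f_inj : injective f.
  move=> x y; rewrite /f.
  case: pickP => [j /eqP <- | no_x]; case: pickP => [j' /eqP <- | no_y] //.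
  - by move/t_inj/perm_inj ->.
  - by move=> eq_y; have := no_y ((pi^-1)%g j); rewrite eq_y eqxx.
  - by move=> eq_x; have := no_x ((pi^-1)%g j'); rewrite eq_x eqxx.
by exists (perm f_inj) => i; rewrite permE.
Qed.

Lemma card_increasing_relabel k (t : 'I_k -> V) (pi : {perm 'I_k}) :
  injective t ->
  #|[set sg | increasing (prank sg) t]| <=
    #|[set sg | increasing (prank sg) (t \o pi)]|.
Proof.
move=> /(relabel_perm pi) [tau tau_t].
rewrite -(card_imset _ (mulgI tau)); apply: subset_leq_card.
apply/subsetP => sg' /imsetP [sg]; rewrite inE => /increasingP t_incr ->; rewrite inE.
by apply/increasingP => i j lt_ij; rewrite /prank /= !permM !tau_t t_incr.
Qed.

Lemma card_increasing k (t : 'I_k -> V) :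
  k`! * #|[set sg | increasing (prank sg) t]| <= #|{perm V}|.
Proof.
have [/injectiveP t_inj | t_not_inj] := boolP (injectiveb t); last first.
  suff -> : [set sg | increasing (prank sg) t] = set0 by rewrite cards0 muln0.
  apply/setP => sg; rewrite !inE.
  by apply: contraNF t_not_inj => /increasing_inj/injectiveP.
rewrite -card_Sn -sum_nat_const (eq_bigl xpredT) //.
pose incr_after (pi : {perm 'I_k}) sg := increasing (prank sg) (t \o pi).
apply: leq_trans (_ : \sum_pi #|[set sg | incr_after pi sg]| <= _).
  by apply: leq_sum => pi _; apply: card_increasing_relabel.
rewrite sum_card_rel -sum1_card.
apply: leq_sum => sg _; apply/card_le1P => pi; rewrite inE => t_pi_incr pi'.
by rewrite inE; apply/idP/eqP => [/(increasing_perm_uniq t_pi_incr) | ->].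
Qed.

End RandomOrder.

Section ForwardGraph.
Variables (V : finType) (a : rel V).

Definition forward_indep k (t : 'I_k -> V) : bool :=
  [forall i : 'I_k, forall j : 'I_k, (i < j) ==> ~~ a (t i) (t j)].

Variable r : V -> nat.

Definition forward_graph : rel V :=
  fun u v => (a u v && (r u < r v)) || (a v u && (r v < r u)).

Lemma forward_graph_sym : symmetric forward_graph.
Proof. by move=> u v; rewrite /forward_graph orbC. Qed.

Lemma forward_graph_irr : irreflexive forward_graph.
Proof. by move=> u; rewrite /forward_graph ltnn !andbF. Qed.

Lemma forward_graphE u v : r u < r v -> forward_graph u v = a u v.
Proof.
by move=> lt_uv; rewrite /forward_graph lt_uv andbT ltnNge ltnW // andbF orbF.
Qed.

Hypothesis r_inj : injective r.

Lemma forward_graph_Ks_free s : Ts_free a s -> Ks_free forward_graph s.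
Proof.
move=> Ts_free_a [f [f_inj f_clique]]; apply: Ts_free_a.
have card_im : #|f @: setT| = s by rewrite card_imset // cardsT card_ord.
have [t t_in t_incr] := exists_increasing_enum r_inj card_im.
exists t; split => [|i j lt_ij]; first exact: increasing_inj t_incr.
rewrite -forward_graphE; last by move/increasingP: t_incr; apply.
have [[i' _ t_i] [j' _ t_j]] := (imsetP (t_in i), imsetP (t_in j)).
rewrite t_i t_j; apply: f_clique; apply: contraTneq lt_ij => eq_ij'.
have eq_tij : t i = t j by rewrite t_i t_j eq_ij'.
by rewrite (increasing_inj t_incr eq_tij) ltnn.
Qed.

Lemma indep_count_forward_graph k :
  indep_count forward_graph k <=
    #|[set t : {ffun 'I_k -> V} | forward_indep t && increasing r t]|.
Proof.
apply: leq_trans (leq_imset_card (fun t : {ffun 'I_k -> V} => t @: setT) _).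
apply/subset_leq_card/subsetP => S.
rewrite inE => /andP [/eqP card_S /forallP S_indep].
have [t t_in /increasingP t_incr] := exists_increasing_enum r_inj card_S.
have ft_incr : increasing r [ffun i => t i].
  by apply/increasingP => i j; rewrite !ffunE; apply: t_incr.
apply/imsetP; exists [ffun i => t i].
  rewrite inE ft_incr andbT.
  apply/forallP => i; apply/forallP => j; apply/implyP => lt_ij.
  rewrite !ffunE -forward_graphE ?t_incr //.
  by have /forallP/(_ (t j))/implyP := implyP (S_indep (t i)) (t_in i); apply.
apply/eqP; rewrite eq_sym eqEcard card_imset ?cardsT ?card_ord ?card_S;
  last exact: increasing_inj ft_incr.
by rewrite leqnn andbT; apply/subsetP => _ /imsetP [i _ ->]; rewrite ffunE.
Qed.

End ForwardGraph.

Lemma exists_perm_indep_count (V : finType) (a : rel V) k :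
  exists sg : {perm V},
    k`! * indep_count (forward_graph a (prank sg)) k <= fwi a k.
Proof.
apply: exists_le_average; first by apply/card_gt0P; exists 1%g.
pose incr_indep (sg : {perm V}) (t : {ffun 'I_k -> V}) :=
  forward_indep a t && increasing (prank sg) t.
apply: leq_trans (_ : \sum_sg k`! * #|[set t | incr_indep sg t]| <= _).
  apply: leq_sum => sg _; rewrite leq_mul2l orbC indep_count_forward_graph //.
  exact: prank_inj.
rewrite -big_distrr sum_card_rel big_distrr /= mulnC.
have -> : fwi a k = \sum_(t : {ffun 'I_k -> V}) forward_indep a t.
  by rewrite -card_set_sum.
rewrite big_distrl /=; apply: leq_sum => t _; rewrite /incr_indep.
by case: (forward_indep a t) => /=; rewrite ?mul1n ?card_increasing ?cards0 ?muln0.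
Qed.

Section ExpFactorialBound.
Local Open Scope R_scope.

Lemma succ_pow_le_exp n : INR n.+1 ^ n <= exp 1 * INR n ^ n.
Proof.
case: n => [|n]; first by have := exp_ineq1_le 1; rewrite /=; lra.
have n_gt0 : 0 < INR n.+1 by apply: lt_0_INR; apply/ltP.
have -> : INR n.+2 = INR n.+1 * (1 + / INR n.+1) by rewrite (S_INR n.+1); field; lra.
have exp_pow : exp (/ INR n.+1) ^ n.+1 = exp 1.
  rewrite -Rpower_pow; last exact: exp_pos.
  by rewrite /Rpower ln_exp Rinv_r //; lra.
rewrite Rpow_mult_distr Rmult_comm -exp_pow; apply: Rmult_le_compat_r.
  by apply: pow_le; lra.
apply: pow_incr; have := exp_ineq1_le (/ INR n.+1).
by have := Rinv_0_lt_compat _ n_gt0; lra.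
Qed.

Lemma pow_le_exp_fact k : INR k ^ k <= exp 1 ^ k * INR k`!.
Proof.
elim: k => [|k IHk]; first by rewrite /=; lra.
have := Rmult_le_compat_l _ _ _ (Rlt_le _ _ (exp_pos 1)) IHk.
move/(Rle_trans _ _ _ (succ_pow_le_exp k))/(Rmult_le_compat_l _ _ _ (pos_INR k.+1)).
by rewrite factS -multE mult_INR /=; lra.
Qed.

Lemma le_exp_div_pow_of_fact (k m n : nat) : (0 < k)%nat -> (k`! * m <= n)%nat ->
  INR m <= (exp 1 / INR k) ^ k * INR n.
Proof.
move=> k_gt0 /leP/le_INR; rewrite -multE mult_INR => fact_m_le.
have k_pow_gt0 : 0 < INR k ^ k by apply: pow_lt; apply: lt_0_INR; apply/ltP.
have exp_pow_ge0 : 0 <= exp 1 ^ k by apply: pow_le; apply: Rlt_le; apply: exp_pos.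
have m_le := Rmult_le_compat_l _ _ _ (pos_INR m) (pow_le_exp_fact k).
have n_ge := Rmult_le_compat_l _ _ _ exp_pow_ge0 fact_m_le.
apply: (Rmult_le_reg_r (INR k ^ k)) => //.
have -> : (exp 1 / INR k) ^ k * INR n * INR k ^ k = exp 1 ^ k * INR n.
  by rewrite Rpow_mult_distr pow_inv; field; lra.
lra.
Qed.

End ExpFactorialBound.

Theorem lemma2p3 (V : finType) (a : rel V) (s : nat) :
  1 <= s -> irreflexive a -> Ts_free a s ->
  forall k : nat, 1 <= k ->
  exists g : rel V,
    [/\ symmetric g, irreflexive g, Ks_free g s &
     (INR (indep_count g k) <= (exp 1 / INR k) ^ k * INR (fwi a k))%R].
Proof.
move=> _ _ Ts_free_a k k_gt0.
have [sg indep_le] := exists_perm_indep_count a k.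
exists (forward_graph a (prank sg)); split.
- exact: forward_graph_sym.
- exact: forward_graph_irr.
- apply: forward_graph_Ks_free Ts_free_a; exact: prank_inj.
- exact: le_exp_div_pow_of_fact k_gt0 indep_le.
Qed.
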